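(* Let $\hat\sigma_1,\hat\sigma_2,\hat\sigma_3$ be the Pauli matrices and, for arbitrary $\alpha_1,\alpha_2,\alpha_3\in\mathbb{R}$, let $$\Omega = e^{-i(\alpha_1\hat\sigma_1\otimes\hat\sigma_1+\alpha_2\hat\sigma_2\otimes\hat\sigma_2+\alpha_3\hat\sigma_3\otimes\hat\sigma_3)}.$$ Let $\rho^{SE}_D$ be any two-qubit density operator whose correlation matrix $t_{ij}=\operatorname{Tr}(\rho^{SE}_D\,\hat\sigma_i\otimes\hat\sigma_j)$ is diagonal, and let $\rho^S=\operatorname{Tr}_E\rho^{SE}_D$. Then there exists a single-qubit density operator $\zeta^E$ such that $$\operatorname{Tr}_E\big(\Omega\rho^{SE}_D\Omega^\dagger\big)=\operatorname{Tr}_E\big(\Omega(\rho^S\otimes\zeta^E)\Omega^\dagger\big),$$ i.e. the system dynamics are $U$-generated by a product state for $U=\Omega$.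
   Context: A two-qubit state is written $\rho^{SE}=\tfrac14\big(\mathbb{I}\otimes\mathbb{I}+\vec a\cdot\vec\sigma\otimes\mathbb{I}+\mathbb{I}\otimes\vec b\cdot\vec\sigma+\sum_{i,j}t_{ij}\hat\sigma_i\otimes\hat\sigma_j\big)$, where $(t_{ij})$ is its correlation matrix. ''$U$-generated by a product state'' means existence of a valid environment state $\zeta^E$ with $\operatorname{Tr}_E(U\rho^{SE}U^\dagger)=\operatorname{Tr}_E(U(\rho^S\otimes\zeta^E)U^\dagger)$. *)

From HB Require Import structures.
From mathcomp Require Import all_boot all_order all_algebra.
From mathcomp Require Import all_classical all_reals all_analysis.
From mathcomp Require Export complex mxtens.
Set Implicit Arguments. Unset Strict Implicit. Unset Printing Implicit Defensive.
Import Order.TTheory GRing.Theory Num.Theory.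
Local Open Scope ring_scope.
Local Open Scope complex_scope.

Section QDefs.
Variable R : realType.
Local Notation C := R[i].

Definition dagger m n (A : 'M[C]_(m, n)) : 'M[C]_(n, m) := (map_mx Num.conj A)^T.

(* matrix power (without needing a ring structure on 'M_n) *)
Definition mxpow n (A : 'M[C]_n) (k : nat) : 'M[C]_n := iter k (mulmx A) 1%:M.

Definition mexp n (A : 'M[C]_n) : 'M[C]_n :=
  limn (fun N : nat => \sum_(k < N) (k`!%:R : C)^-1 *: mxpow A k).

(* Pauli matrices  sigma_1 = [[0,1],[1,0]], sigma_2 = [[0,-i],[i,0]],
   sigma_3 = [[1,0],[0,-1]]  (rows/columns indexed by 'I_2 = {0,1}) *)
Definition sigma1 : 'M[C]_2 := \matrix_(a, b) (if a == b then 0 else 1).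
Definition sigma2 : 'M[C]_2 :=
  \matrix_(a, b) (if a == b then 0 else if (a : nat) == 0%N then - 'i else 'i).
Definition sigma3 : 'M[C]_2 :=
  \matrix_(a, b) (if a == b then (if (a : nat) == 0%N then 1 else -1) else 0).
Definition pauli (k : 'I_3) : 'M[C]_2 :=
  match val k with 0%N => sigma1 | 1%N => sigma2 | _ => sigma3 end.

(* partial trace over the environment E (second tensor factor of S (x) E,
   with the Kronecker ordering of mxtens: (A *t B) (i,j) (k,l) = A i k * B j l) *)
Definition ptraceE (X : 'M[C]_(2 * 2)) : 'M[C]_2 :=
  \matrix_(a, b) \sum_(k < 2) X (mxtens_index (a, k)) (mxtens_index (b, k)).

Definition is_density n (A : 'M[C]_n) : Prop :=
  [/\ dagger A = A,
      (forall v : 'cV[C]_n, 0 <= (dagger v *m A *m v) ord0 ord0)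
    & \tr A = 1].

Definition corr (rho : 'M[C]_(2 * 2)) (i j : 'I_3) : C :=
  \tr (rho *m (pauli i *t pauli j)).

End QDefs.

From HB Require Import structures.
From mathcomp Require Import all_boot all_order all_algebra.
From mathcomp Require Import all_classical all_reals all_analysis.
From mathcomp Require Import complex mxtens.
From mathcomp Require Import ring lra.
Set Implicit Arguments.
Unset Strict Implicit.
Unset Printing Implicit Defensive.
Import numFieldNormedType.Exports.
Import Order.TTheory GRing.Theory Num.Theory.
Local Open Scope ring_scope.
Local Open Scope complex_scope.

Ltac complex_eq := apply/eqP; rewrite eq_complex /=; apply/andP; split; apply/eqP.

Ltac mx2 := apply/matrixP => -[[|[|//]] ?] -[[|[|//]] ?];
  rewrite !mxE ?big_ord_recl ?big_ord0 /= ?mxE /=.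

Section Matrices.
Variable R : realType.
Local Notation C := R[i].
Local Notation pauli := (pauli R).

Definition psd n (A : 'M[C]_n) :=
  forall v : 'cV[C]_n, 0 <= (dagger v *m A *m v) ord0 ord0.

Lemma daggerM m n p (A : 'M[C]_(m, n)) (B : 'M[C]_(n, p)) :
  dagger (A *m B) = dagger B *m dagger A.
Proof. by rewrite /dagger map_mxM trmx_mul. Qed.

Lemma daggerD m n (A B : 'M[C]_(m, n)) : dagger (A + B) = dagger A + dagger B.
Proof. by apply/matrixP => i j; rewrite !mxE rmorphD. Qed.

Lemma daggerZ m n c (A : 'M[C]_(m, n)) : dagger (c *: A) = Num.conj c *: dagger A.
Proof. by apply/matrixP => i j; rewrite !mxE rmorphM. Qed.

Lemma dagger_scalar n (c : C) : dagger (c%:M : 'M[C]_n) = (Num.conj c)%:M.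
Proof. by apply/matrixP => i j; rewrite !mxE eq_sym rmorphMn. Qed.

Lemma dagger_tens m n p q (A : 'M[C]_(m, n)) (B : 'M[C]_(p, q)) :
  dagger (A *t B) = dagger A *t dagger B.
Proof. by rewrite /dagger map_mxT trmx_tens. Qed.

Lemma mxtrace_dagger n (A : 'M[C]_n) : \tr (dagger A) = Num.conj (\tr A).
Proof. by rewrite /dagger mxtrace_tr rmorph_sum; apply: eq_bigr => i _; rewrite mxE. Qed.

Lemma conj_real (x : C) : Num.conj x = x -> x = (complex.Re x)%:C.
Proof. by case: x => a b [hb]; complex_eq => //; lra. Qed.

Lemma mxtrace_hermitian_real n (A B : 'M[C]_n) :
  dagger A = A -> dagger B = B -> \tr (A *m B) = (complex.Re (\tr (A *m B)))%:C.
Proof.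
move=> hA hB; apply: conj_real.
by rewrite -mxtrace_dagger daggerM hA hB mxtrace_mulC.
Qed.

Lemma sum_mxtens m n (F : 'I_(m * n) -> C) :
  \sum_(i < m * n) F i = \sum_(a < m) \sum_(k < n) F (mxtens_index (a, k)).
Proof.
rewrite pair_big; apply: reindex => /=.
exists (@mxtens_unindex m n) => [[a k]|i] _ /=; first by rewrite mxtens_indexK.
by rewrite mxtens_unindexK.
Qed.

Lemma tensmxDl m n p q (A B : 'M[C]_(m, n)) (D : 'M[C]_(p, q)) :
  (A + B) *t D = A *t D + B *t D.
Proof. by apply/matrixP => i j; rewrite !mxE mulrDl. Qed.

Lemma tensmxDr m n p q (A : 'M[C]_(m, n)) (B D : 'M[C]_(p, q)) :
  A *t (B + D) = A *t B + A *t D.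
Proof. by apply/matrixP => i j; rewrite !mxE mulrDr. Qed.

Lemma tensmxZl m n p q c (A : 'M[C]_(m, n)) (B : 'M[C]_(p, q)) :
  (c *: A) *t B = c *: (A *t B).
Proof. by apply/matrixP => i j; rewrite !mxE mulrA. Qed.

Lemma tensmxZr m n p q c (A : 'M[C]_(m, n)) (B : 'M[C]_(p, q)) :
  A *t (c *: B) = c *: (A *t B).
Proof. by apply/matrixP => i j; rewrite !mxE mulrCA. Qed.

Lemma tens1mx1 m n : (1%:M : 'M[C]_m) *t (1%:M : 'M[C]_n) = 1%:M.
Proof.
apply/matrixP => i j.
case: (mxtens_indexP i) => a k; case: (mxtens_indexP j) => b l.
by rewrite tensmxE !mxE (can_eq (@mxtens_indexK m n)) xpair_eqE -mulnb natrM.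
Qed.

Lemma mxtrace_tens m n (A : 'M[C]_m) (B : 'M[C]_n) : \tr (A *t B) = \tr A * \tr B.
Proof. by rewrite /mxtrace mulr_sum; apply: eq_bigr => i _; rewrite mxE. Qed.

Lemma mxtrace_tens_mul m n (A P : 'M[C]_m) (B Q : 'M[C]_n) :
  \tr ((P *t Q) *m (A *t B)) = \tr (P *m A) * \tr (Q *m B).
Proof. by rewrite tensmx_mul mxtrace_tens. Qed.

Lemma pauli_hermitian k : dagger (pauli k) = pauli k.
Proof. by case: k => [[|[|[|//]]] ?]; mx2; complex_eq; ring. Qed.

Lemma pauli_sqr k : pauli k *m pauli k = 1%:M.
Proof. by case: k => [[|[|[|//]]] ?]; mx2; complex_eq; ring. Qed.

Lemma pauli_mulS k : pauli k *m pauli (ordS k) = 'i *: pauli (ordS (ordS k)).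
Proof. by case: k => [[|[|[|//]]] ?]; mx2; complex_eq; ring. Qed.

Lemma pauli_anticomm j k : j != k -> pauli j *m pauli k = - (pauli k *m pauli j).
Proof.
by case: j k => [[|[|[|//]]] ?] [[|[|[|//]]] ?] //= _; mx2; complex_eq; ring.
Qed.

Lemma mxtrace_pauli k : \tr (pauli k) = 0.
Proof.
by case: k => [[|[|[|//]]] ?]; rewrite /mxtrace !big_ord_recl big_ord0 !mxE /=;
  complex_eq; ring.
Qed.


Lemma mxtrace_pauli_mul j k : \tr (pauli j *m pauli k) = (j == k)%:R *+ 2.
Proof.
by case: j k => [[|[|[|//]]] ?] [[|[|[|//]]] ?];
  rewrite /mxtrace ?(mxE, big_ord_recl, big_ord0) /=; complex_eq; ring.
Qed.

Lemma matrix_reim m n (A : 'M[C]_(m.+1, n.+1)) :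
  exists x y : nat -> nat -> R, A = \matrix_(i, j) (x i j +i* y i j).
Proof.
exists (fun i j => complex.Re (A (inord i) (inord j))).
exists (fun i j => complex.Im (A (inord i) (inord j))).
by apply/matrixP => i j; rewrite mxE !inord_val; case: (A i j).
Qed.

Lemma pauli_expansion (A : 'M[C]_2) :
  A = 2^-1 *: (\tr A *: 1%:M + \sum_k \tr (pauli k *m A) *: pauli k).
Proof.
have [x [y ->]] := matrix_reim A.
by rewrite /mxtrace !big_ord_recl !big_ord0; mx2;
  rewrite ?(mxE, big_ord_recl, big_ord0) /=; complex_eq; field.
Qed.

Definition bloch (z : 'I_3 -> R) : 'M[C]_2 :=
  2^-1 *: (1%:M + \sum_k (z k)%:C *: pauli k).

Lemma mxtrace_bloch z : \tr (bloch z) = 1.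
Proof.
rewrite mxtraceZ mxtraceD raddf_sum /= big1 => [|k _]; last first.
  by rewrite mxtraceZ mxtrace_pauli mulr0.
by rewrite mxtrace1 addr0 mulVf // pnatr_eq0.
Qed.

Lemma mxtrace_pauli_bloch z k : \tr (pauli k *m bloch z) = (z k)%:C.
Proof.
rewrite -scalemxAr mxtraceZ mulmxDr mulmx1 mxtraceD mxtrace_pauli add0r.
rewrite mulmx_sumr raddf_sum /= (bigD1 k) //= big1 => [|j /negbTE jk].
  by rewrite -scalemxAr mxtraceZ mxtrace_pauli_mul eqxx addr0 /=; field.
by rewrite -scalemxAr mxtraceZ mxtrace_pauli_mul eq_sym jk mul0rn mulr0.
Qed.


Lemma bloch_of_trace (A : 'M[C]_2) :
  \tr A = 1 -> (forall k, \tr (pauli k *m A) = (complex.Re (\tr (pauli k *m A)))%:C) ->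
  A = bloch (fun k => complex.Re (\tr (pauli k *m A))).
Proof.
move=> trA real_tr; rewrite {1}[A]pauli_expansion trA scale1r /bloch.
by congr (_ *: (_ + _)); apply: eq_bigr => k _; rewrite -real_tr.
Qed.

Lemma dagger1 n : dagger (1%:M : 'M[C]_n) = 1%:M.
Proof. by rewrite dagger_scalar rmorph1. Qed.

Lemma mxtrace_conj n (X U Y : 'M[C]_n) :
  \tr (X *m (U *m Y *m dagger U)) = \tr (dagger U *m X *m U *m Y).
Proof. by rewrite !mulmxA mxtrace_mulC !mulmxA. Qed.

Lemma mxtrace_unitary_conj n (U Y : 'M[C]_n) :
  dagger U *m U = 1%:M -> \tr (U *m Y *m dagger U) = \tr Y.
Proof. by move=> hU; rewrite mxtrace_mulC mulmxA hU mul1mx. Qed.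

End Matrices.

Section Bloch.
Variable R : realType.
Local Notation C := R[i].
Local Notation pauli := (pauli R).
Lemma fun3E (z : 'I_3 -> R) :
  z = (fun k => [:: z (inord 0); z (inord 1); z (inord 2)]`_k).
Proof. by apply: boolp.funext => -[[|[|[|//]]] ?] /=; congr z; apply: val_inj; rewrite /= inordK. Qed.

Lemma quad_formE n (A : 'M[C]_n) (v : 'cV[C]_n) :
  (dagger v *m A *m v) ord0 ord0 = \sum_i \sum_j Num.conj (v i ord0) * A i j * v j ord0.
Proof.
rewrite mxE exchange_big /=; apply: eq_bigr => j _.
by rewrite mxE mulr_suml; apply: eq_bigr => i _; rewrite !mxE.
Qed.

Lemma cauchy_schwarz3 (x1 x2 x3 y1 y2 y3 : R) :
  (x1 * y1 + x2 * y2 + x3 * y3) ^+ 2 <=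
  (x1 ^+ 2 + x2 ^+ 2 + x3 ^+ 2) * (y1 ^+ 2 + y2 ^+ 2 + y3 ^+ 2).
Proof.
rewrite -subr_ge0.
have -> : (x1 ^+ 2 + x2 ^+ 2 + x3 ^+ 2) * (y1 ^+ 2 + y2 ^+ 2 + y3 ^+ 2)
  - (x1 * y1 + x2 * y2 + x3 * y3) ^+ 2
  = (x1 * y2 - x2 * y1) ^+ 2 + (x1 * y3 - x3 * y1) ^+ 2 + (x2 * y3 - x3 * y2) ^+ 2 by ring.
by rewrite !addr_ge0 ?sqr_ge0.
Qed.

Lemma bloch_psd (z : 'I_3 -> R) : \sum_k z k ^+ 2 <= 1 -> psd (bloch z).
Proof.
rewrite [z]fun3E; move: (z (inord 0)) (z (inord 1)) (z (inord 2)) => z1 z2 z3.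
rewrite ?(big_ord_recl, big_ord0) /= addr0 => hz v.
have [x [y ->]] := matrix_reim v.
rewrite quad_formE ?(mxE, big_ord_recl, big_ord0) /bump /= lecE /=.
apply/andP; split; first by apply/eqP; ring.
move: (x 0%N 0%N) (y 0%N 0%N) (x 1%N 0%N) (y 1%N 0%N) => p1 q1 p2 q2.
pose N := p1 ^+ 2 + q1 ^+ 2 + p2 ^+ 2 + q2 ^+ 2.
pose u1 := 2 * (p1 * p2 + q1 * q2).
pose u2 := 2 * (p1 * q2 - q1 * p2).
pose u3 := p1 ^+ 2 + q1 ^+ 2 - (p2 ^+ 2 + q2 ^+ 2).
have hu : u1 ^+ 2 + u2 ^+ 2 + u3 ^+ 2 = N ^+ 2 by rewrite /u1 /u2 /u3 /N; ring.
have hN : 0 <= N by rewrite /N !addr_ge0 ?sqr_ge0.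
have CS := cauchy_schwarz3 z1 z2 z3 u1 u2 u3.
have h : 0 <= N + (z1 * u1 + z2 * u2 + z3 * u3) by nra.
apply: le_trans (divr_ge0 h (ler0n R 2)) _; rewrite le_eqVlt; apply/orP; left; apply/eqP.
by rewrite /N /u1 /u2 /u3; field.
Qed.

Lemma psd_bloch (z : 'I_3 -> R) : psd (bloch z) -> \sum_k z k ^+ 2 <= 1.
Proof.
rewrite [z]fun3E; move: (z (inord 0)) (z (inord 1)) (z (inord 2)) => z1 z2 z3 hz.
have := hz (\col_i [:: (- z1 / 2) +i* (z2 / 2); ((1 + z3) / 2)%:C]`_i).
have := hz (\col_i [:: ((1 - z3) / 2)%:C; (- z1 / 2) +i* (- z2 / 2)]`_i).
rewrite !quad_formE ?(mxE, big_ord_recl, big_ord0) /bump /= !lecE /=.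
move=> /andP[_ h1] /andP[_ h2]; have h := addr_ge0 h1 h2.
match type of h with is_true (_ <= ?e) =>
  have E : e = (1 - (z3 ^+ 2 + (z2 ^+ 2 + z1 ^+ 2))) / 4 by field end.
rewrite ?(big_ord_recl, big_ord0) /=; lra.
Qed.

Lemma bloch_hermitian (z : 'I_3 -> R) : dagger (bloch z) = bloch z.
Proof.
rewrite [z]fun3E; move: (z _) (z _) (z _) => z1 z2 z3.
by mx2; rewrite ?(mxE, big_ord_recl, big_ord0) /=; complex_eq; field.
Qed.

Lemma bloch_density (z : 'I_3 -> R) : \sum_k z k ^+ 2 <= 1 -> is_density (bloch z).
Proof. by move=> hz; split; [exact: bloch_hermitian | exact: bloch_psd | exact: mxtrace_bloch]. Qed.

Lemma mxtrace_ptraceE (Q : 'M[C]_2) (Y : 'M[C]_(2 * 2)) :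
  \tr (Q *m ptraceE Y) = \tr ((Q *t 1%:M) *m Y).
Proof.
rewrite /mxtrace sum_mxtens; apply: eq_bigr => a _.
rewrite mxE; under eq_bigr do rewrite mxE mulr_sumr.
rewrite exchange_big; apply: eq_bigr => k _; rewrite mxE sum_mxtens.
apply: eq_bigr => b _; rewrite (bigD1 k) //= big1 => [|l /negbTE lk].
  by rewrite tensmxE mxE eqxx mulr1 addr0.
by rewrite tensmxE mxE eq_sym lk mulr0 mul0r.
Qed.

Definition ptraceS (Y : 'M[C]_(2 * 2)) : 'M[C]_2 :=
  \matrix_(k, l) \sum_(a < 2) Y (mxtens_index (a, k)) (mxtens_index (a, l)).

Lemma mxtrace_ptraceS (Q : 'M[C]_2) (Y : 'M[C]_(2 * 2)) :
  \tr (Q *m ptraceS Y) = \tr ((1%:M *t Q) *m Y).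
Proof.
rewrite /mxtrace /ptraceS sum_mxtens exchange_big; apply: eq_bigr => k _.
transitivity (\sum_l \sum_a Q k l * Y (mxtens_index (a, l)) (mxtens_index (a, k))).
  by rewrite mxE; apply: eq_bigr => l _; rewrite mxE mulr_sumr.
rewrite exchange_big; apply: eq_bigr => a _; rewrite mxE sum_mxtens.
rewrite [RHS](bigD1 a) //= [X in _ + X]big1 => [|b /negbTE ba]; last first.
  by rewrite big1 // => l _; rewrite tensmxE mxE eq_sym ba mul0r mul0r.
by rewrite addr0; apply: eq_bigr => l _; rewrite tensmxE mxE eqxx mul1r.
Qed.

Lemma psd_ptraceS (Y : 'M[C]_(2 * 2)) : psd Y -> psd (ptraceS Y).
Proof.
move=> hY v.
have -> : (dagger v *m ptraceS Y *m v) ord0 ord0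
  = \sum_(a < 2) (dagger ((delta_mx a ord0 : 'cV[C]_2) *t v) *m Y *m ((delta_mx a ord0 : 'cV[C]_2) *t v)) ord0 ord0.
  have [x [y ->]] := matrix_reim v.
  have [p [q ->]] := matrix_reim Y.
  by rewrite !quad_formE ?(mxE, big_ord_recl, big_ord0) /=; complex_eq; ring.
by apply: sumr_ge0 => a _; apply: hY.
Qed.
Lemma mx2_eq_pauli (A B : 'M[C]_2) : \tr A = \tr B ->
  (forall k, \tr (pauli k *m A) = \tr (pauli k *m B)) -> A = B.
Proof.
move=> trAB trPAB; rewrite [A]pauli_expansion [B]pauli_expansion trAB.
by congr (_ *: (_ + _)); apply: eq_bigr => k _; rewrite trPAB.
Qed.

Lemma mxtrace_ptraceE1 (Y : 'M[C]_(2 * 2)) : \tr (ptraceE Y) = \tr Y.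
Proof. by have := mxtrace_ptraceE 1%:M Y; rewrite !mul1mx tens1mx1 mul1mx. Qed.

Lemma mxtrace_ptraceS1 (Y : 'M[C]_(2 * 2)) : \tr (ptraceS Y) = \tr Y.
Proof. by have := mxtrace_ptraceS 1%:M Y; rewrite !mul1mx tens1mx1 mul1mx. Qed.

End Bloch.

Section BlochSystem.
Variable R : realType.

Lemma cross_solve (w1 w2 w3 b1 b2 b3 : R) : exists z1 z2 z3 : R,
  [/\ z1 = b1 + (w2 * z3 - w3 * z2), z2 = b2 + (w3 * z1 - w1 * z3),
      z3 = b3 + (w1 * z2 - w2 * z1)
    & z1 ^+ 2 + z2 ^+ 2 + z3 ^+ 2 <= b1 ^+ 2 + b2 ^+ 2 + b3 ^+ 2].
Proof.
have D0 : 1 + (w1 ^+ 2 + w2 ^+ 2 + w3 ^+ 2) != 0.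
  by rewrite lt0r_neq0 // ltr_pwDl // !addr_ge0 ?sqr_ge0.
pose wb := w1 * b1 + w2 * b2 + w3 * b3.
pose D := 1 + (w1 ^+ 2 + w2 ^+ 2 + w3 ^+ 2).
pose z1 := (b1 + (w2 * b3 - w3 * b2) + wb * w1) / D.
pose z2 := (b2 + (w3 * b1 - w1 * b3) + wb * w2) / D.
pose z3 := (b3 + (w1 * b2 - w2 * b1) + wb * w3) / D.
exists z1, z2, z3.
have E1 : z1 = b1 + (w2 * z3 - w3 * z2) by rewrite /z1 /z2 /z3 /wb /D; field.
have E2 : z2 = b2 + (w3 * z1 - w1 * z3) by rewrite /z1 /z2 /z3 /wb /D; field.
have E3 : z3 = b3 + (w1 * z2 - w2 * z1) by rewrite /z1 /z2 /z3 /wb /D; field.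
split => //.
have zb : z1 * b1 + z2 * b2 + z3 * b3 = z1 ^+ 2 + z2 ^+ 2 + z3 ^+ 2.
  apply/eqP; rewrite -subr_eq0.
  have -> : z1 * b1 + z2 * b2 + z3 * b3 - (z1 ^+ 2 + z2 ^+ 2 + z3 ^+ 2)
    = z1 * (b1 + (w2 * z3 - w3 * z2) - z1) + z2 * (b2 + (w3 * z1 - w1 * z3) - z2)
      + z3 * (b3 + (w1 * z2 - w2 * z1) - z3) by ring.
  by rewrite -E1 -E2 -E3 !subrr !mulr0 !addr0.
have CS := cauchy_schwarz3 z1 z2 z3 b1 b2 b3.
rewrite zb in CS.
have := sqr_ge0 z1; have := sqr_ge0 z2; have := sqr_ge0 z3.
have := sqr_ge0 b1; have := sqr_ge0 b2; have := sqr_ge0 b3.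
nra.
Qed.

Lemma bloch_system (s c u v : 'I_3 -> R) : exists z : 'I_3 -> R,
  (forall l, let m := ordS l in let n := ordS m in
     s m * s n * (v l - z l) - s m * c n * u n * z m + c m * s n * u m * z n = 0)
  /\ \sum_k z k ^+ 2 <= \sum_k v k ^+ 2.
Proof.
rewrite [s]fun3E [c]fun3E [u]fun3E [v]fun3E.
move: (s (inord 0)) (s (inord 1)) (s (inord 2)) (c (inord 0)) (c (inord 1)) (c (inord 2)).
move: (u (inord 0)) (u (inord 1)) (u (inord 2)) (v (inord 0)) (v (inord 1)) (v (inord 2)).
move=> u0 u1 u2 v0 v1 v2 s0 s1 s2 c0 c1 c2.
suff [z0 [z1 [z2 [E0 E1 E2 hz]]]] : exists z0 z1 z2 : R,
  [/\ s1 * s2 * (v0 - z0) - s1 * c2 * u2 * z1 + c1 * s2 * u1 * z2 = 0,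
      s2 * s0 * (v1 - z1) - s2 * c0 * u0 * z2 + c2 * s0 * u2 * z0 = 0,
      s0 * s1 * (v2 - z2) - s0 * c1 * u1 * z0 + c0 * s1 * u0 * z1 = 0
    & z0 ^+ 2 + z1 ^+ 2 + z2 ^+ 2 <= v0 ^+ 2 + v1 ^+ 2 + v2 ^+ 2].
  exists (fun k => [:: z0; z1; z2]`_k); split; first by move=> -[[|[|[|//]]] ?] /=.
  by rewrite !big_ord_recl big_ord0 /= !addr0; lra.
have sq := sqr_ge0; have sq0 : 0 <= v0 ^+ 2 := sq _ v0.
have sq1 : 0 <= v1 ^+ 2 := sq _ v1; have sq2 : 0 <= v2 ^+ 2 := sq _ v2.
have [->|s0n] := eqVneq s0 0.
  by exists v0, 0, 0; split; rewrite ?expr0n /=; [ring|ring|ring|lra].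
have [->|s1n] := eqVneq s1 0.
  by exists 0, v1, 0; split; rewrite ?expr0n /=; [ring|ring|ring|lra].
have [->|s2n] := eqVneq s2 0.
  by exists 0, 0, v2; split; rewrite ?expr0n /=; [ring|ring|ring|lra].
have [z0 [z1 [z2 [E0 E1 E2 hz]]]] :=
  cross_solve (c0 * u0 / s0) (c1 * u1 / s1) (c2 * u2 / s2) v0 v1 v2.
exists z0, z1, z2; split => //.
- by rewrite {1}E0; field; rewrite s1n s2n.
- by rewrite {1}E1; field; rewrite s0n s2n.
- by rewrite {1}E2; field; rewrite s0n s1n.
Qed.
End BlochSystem.

Section Unitary.
Variable R : realType.
Local Notation C := R[i].
Local Notation pauli := (pauli R).
Section Rotation.
Variable n : nat.
Implicit Types (P X : 'M[C]_n) (a b : R).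

Definition expNimx a P : 'M[C]_n := (cos a)%:C *: 1%:M - ('i * (sin a)%:C) *: P.

Lemma expNimx0 P : expNimx 0 P = 1%:M.
Proof. by rewrite /expNimx cos0 sin0 mulr0 scale0r subr0 scale1r. Qed.

Lemma daggerB m p (A B : 'M[C]_(m, p)) : dagger (A - B) = dagger A - dagger B.
Proof. by apply/matrixP => i j; rewrite !mxE rmorphB. Qed.

Lemma dagger_expNimx a P : dagger P = P -> dagger (expNimx a P) = expNimx (- a) P.
Proof.
move=> hP; rewrite /expNimx daggerB !daggerZ hP dagger_scalar rmorph1.
by rewrite cosN sinN; congr (_ *: _ - _ *: _); complex_eq; ring.
Qed.

Lemma expNimx_comm a P X : X *m P = P *m X -> expNimx a P *m X = X *m expNimx a P.
Proof.
by move=> hXP; rewrite /expNimx mulmxBl mulmxBr -!scalemxAl -!scalemxAr mul1mx mulmx1 hXP.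
Qed.

Lemma expNimx_anticomm a P X : X *m P = - (P *m X) -> expNimx a P *m X = X *m expNimx (- a) P.
Proof.
move=> hXP; rewrite /expNimx mulmxBl mulmxBr -!scalemxAl -!scalemxAr mul1mx mulmx1 hXP.
by rewrite cosN sinN rmorphN /= mulrN scaleNr scalerN opprK.
Qed.

Section Involution.
Variable P : 'M[C]_n.
Hypothesis P_invol : P *m P = 1%:M.

Lemma mul_span1 x y u v :
  (x *: 1%:M + y *: P) *m (u *: 1%:M + v *: P)
  = (x * u + y * v) *: 1%:M + (x * v + y * u) *: P.
Proof.
rewrite mulmxDl !mulmxDr -!scalemxAl -!scalemxAr !mul1mx mulmx1 P_invol !scalerA.
by rewrite !scalerDl [(y * u) *: P + _]addrC addrACA.
Qed.

Lemma expNimxD a b : expNimx a P *m expNimx b P = expNimx (a + b) P.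
Proof.
rewrite /expNimx -!scaleNr mul_span1 cosD sinD.
by congr (_ *: _ + _ *: _); complex_eq; ring.
Qed.

Hypothesis P_hermitian : dagger P = P.

Lemma conj_expNimx_comm a X : X *m P = P *m X -> dagger (expNimx a P) *m X *m expNimx a P = X.
Proof.
move=> hXP; rewrite (dagger_expNimx _ P_hermitian) (expNimx_comm _ hXP) -mulmxA expNimxD addNr expNimx0.
exact: mulmx1.
Qed.

Lemma conj_expNimx_anticomm a X :
  X *m P = - (P *m X) -> dagger (expNimx a P) *m X *m expNimx a P = X *m expNimx (a *+ 2) P.
Proof.
move=> hXP; rewrite (dagger_expNimx _ P_hermitian) (expNimx_anticomm _ hXP) opprK -mulmxA expNimxD.
by congr (X *m expNimx _ P); rewrite mulr2n.
Qed.

Lemma expNimx_unitary a : dagger (expNimx a P) *m expNimx a P = 1%:M.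
Proof.
rewrite (dagger_expNimx _ P_hermitian) expNimxD addNr; exact: expNimx0.
Qed.

End Involution.

Lemma expNimx_commute a b P Q : P *m Q = Q *m P -> expNimx a P *m expNimx b Q = expNimx b Q *m expNimx a P.
Proof. by move=> hPQ; do 2 apply: expNimx_comm. Qed.

Section ThreeInvolutions.
Variables P1 P2 P3 : 'M[C]_n.
Hypotheses (P1_invol : P1 *m P1 = 1%:M) (P2_invol : P2 *m P2 = 1%:M)
  (P3_invol : P3 *m P3 = 1%:M).
Hypotheses (P1_herm : dagger P1 = P1) (P2_herm : dagger P2 = P2)
  (P3_herm : dagger P3 = P3).
Hypothesis P23 : P2 *m P3 = P3 *m P2.
Variables a1 a2 a3 : R.
Let U := expNimx a1 P1 *m expNimx a2 P2 *m expNimx a3 P3.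

Lemma unitary_expNimx3 : dagger U *m U = 1%:M.
Proof.
rewrite /U !daggerM.
transitivity (dagger (expNimx a3 P3) *m (dagger (expNimx a2 P2) *m
  (dagger (expNimx a1 P1) *m expNimx a1 P1) *m expNimx a2 P2) *m expNimx a3 P3).
  by rewrite !mulmxA.
by rewrite (expNimx_unitary P1_invol P1_herm) mulmx1 (expNimx_unitary P2_invol P2_herm) mulmx1
  (expNimx_unitary P3_invol P3_herm).
Qed.

Lemma conj_expNimx3 X : X *m P1 = P1 *m X -> X *m P2 = - (P2 *m X) ->
  X *m P3 = - (P3 *m X) ->
  dagger U *m X *m U = X *m expNimx (a2 *+ 2) P2 *m expNimx (a3 *+ 2) P3.
Proof.
move=> hX1 hX2 hX3.
have hX3' : X *m expNimx (a2 *+ 2) P2 *m P3 = - (P3 *m (X *m expNimx (a2 *+ 2) P2)).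
  by rewrite -mulmxA (expNimx_comm _ (esym P23)) mulmxA hX3 mulNmx -mulmxA.
rewrite /U !daggerM.
transitivity (dagger (expNimx a3 P3) *m (dagger (expNimx a2 P2) *m
  (dagger (expNimx a1 P1) *m X *m expNimx a1 P1) *m expNimx a2 P2) *m expNimx a3 P3).
  by rewrite !mulmxA.
by rewrite (conj_expNimx_comm P1_invol P1_herm _ hX1) (conj_expNimx_anticomm P2_invol P2_herm _ hX2)
  (conj_expNimx_anticomm P3_invol P3_herm _ hX3').
Qed.

End ThreeInvolutions.
End Rotation.
End Unitary.

Section Exponential.
Variable R : realType.
Local Notation C := R[i].
Local Notation pauli := (pauli R).
Local Open Scope classical_set_scope.
HB.instance Definition _ := NormedModule.copy C C^o.

Definition expNi (h : R) : C := (cos h)%:C - 'i * (sin h)%:C.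

Lemma exprNi k : (- 'i : C) ^+ k =
  ((~~ odd k)%:R * (-1) ^+ k./2)%:C - 'i * ((odd k)%:R * (-1) ^+ k.-1./2)%:C.
Proof.
rewrite -[in LHS](odd_double_half k) exprD -mul2n exprM sqrrN sqr_i.
case hk: (odd k); last first.
  by rewrite /= expr0 !mul1r mul0r rmorph0 mulr0 subr0 rmorphXn rmorphN1.
have -> : k.-1./2 = k./2 by rewrite -[k in LHS]odd_double_half hk /= doubleK.
by rewrite /= expr1 !mul0r !mul1r rmorph0 sub0r rmorphXn rmorphN1 mulNr.
Qed.

Lemma expNi_coeffE (h : R) k : (k`!%:R)^-1 * (- 'i * h%:C) ^+ k
  = (cos_coeff h k)%:C - 'i * (sin_coeff h k)%:C.
Proof.
rewrite exprMn exprNi /cos_coeff /sin_coeff /= !rmorphM /= fmorphV /= !rmorphXn /=.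
by rewrite !rmorph_nat rmorphN1; ring.
Qed.

Lemma normc_real (r : R) : `|r%:C| = `|r|%:C.
Proof. by rewrite normc_def /= expr0n addr0 sqrtr_sqr. Qed.

Lemma cvg_real_complex (u : nat -> R) (l : R) :
  u @ \oo --> l -> (fun k => (u k)%:C : C) @ \oo --> l%:C.
Proof.
move=> /cvgrPdist_lt ul; apply/cvgrPdist_lt => -[e e'].
rewrite ltcE /= => /andP[/eqP -> e0].
near=> k; rewrite -rmorphB normc_real ltcR.
by near: k; exact: ul.
Unshelve. all: by end_near.
Qed.

Lemma expNi_series (h : R) :
  (fun N => \sum_(k < N) (k`!%:R)^-1 * (- 'i * h%:C) ^+ k) @ \oo --> expNi h.
Proof.
have -> : (fun N => \sum_(k < N) (k`!%:R)^-1 * (- 'i * h%:C) ^+ k) =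
    (fun N => (series (cos_coeff h) N)%:C - 'i * (series (sin_coeff h) N)%:C).
  apply: boolp.funext => N; under eq_bigr do rewrite expNi_coeffE.
  by rewrite sumrB -mulr_sumr /series /= !big_mkord !rmorph_sum.
have cos_cvg : series (cos_coeff h) @ \oo --> cos h.
  by rewrite cos.unlock; exact: is_cvg_series_cos_coeff.
have sin_cvg : series (sin_coeff h) @ \oo --> sin h.
  by rewrite sin.unlock; exact: is_cvg_series_sin_coeff.
exact: cvgB (cvg_real_complex cos_cvg) (cvgMl_tmp (a := 'i) (cvg_real_complex sin_cvg)).
Qed.

Section Spectral.
Variables (n : nat) (I : finType) (A : 'M[C]_n) (E : I -> 'M[C]_n) (h : I -> R).
Hypothesis A_eigen : forall p, A *m E p = (- 'i * (h p)%:C) *: E p.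
Hypothesis E_sum1 : \sum_p E p = 1%:M.

Lemma mxpow_spectral k : mxpow A k = \sum_p (- 'i * (h p)%:C) ^+ k *: E p.
Proof.
elim: k => [|k IHk].
  by rewrite /mxpow /= -E_sum1; apply: eq_bigr => p _; rewrite expr0 scale1r.
rewrite /mxpow iterS -/(mxpow A k) IHk mulmx_sumr; apply: eq_bigr => p _.
by rewrite -scalemxAr A_eigen scalerA exprSr.
Qed.

Lemma mexp_spectral : mexp A = \sum_p expNi (h p) *: E p.
Proof.
rewrite /mexp; apply: cvg_lim => //.
have -> : (fun N => \sum_(k < N) (k`!%:R)^-1 *: mxpow A k) = (fun N =>
    \sum_p (\sum_(k < N) (k`!%:R)^-1 * (- 'i * (h p)%:C) ^+ k) *: E p).
  apply: boolp.funext => N; under eq_bigr do rewrite mxpow_spectral scaler_sumr.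
  rewrite exchange_big /=; apply: eq_bigr => p _; rewrite scaler_suml.
  by apply: eq_bigr => k _; rewrite scalerA.
apply: cvg_big => [|p _]; first exact: add_continuous.
by apply: cvgZr_tmp; exact: expNi_series.
Qed.
End Spectral.

Lemma expNiD (x y : R) : expNi (x + y) = expNi x * expNi y.
Proof. by rewrite /expNi cosD sinD; complex_eq; ring. Qed.

Definition sgn (b : bool) : R := (-1) ^+ b.

Lemma sgn_sqr b : sgn b ^+ 2 = 1.
Proof. by case: b; rewrite /sgn /= ?expr1 ?expr0 ?sqrrN expr1n. Qed.

Lemma expNimx_eigen n (x s : R) (S E : 'M[C]_n) :
  s ^+ 2 = 1 -> S *m E = s%:C *: E -> expNimx x S *m E = expNi (s * x) *: E.
Proof.
move=> /eqP; rewrite sqrf_eq1 => /orP[] /eqP -> hSE;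
  rewrite /expNimx mulmxBl -!scalemxAl mul1mx hSE scalerA -scalerBl;
  by congr (_ *: _); rewrite /expNi ?mulN1r ?mul1r ?cosN ?sinN; complex_eq; ring.
Qed.

Lemma invol_eigen n (S : 'M[C]_n) (b : bool) : S *m S = 1%:M ->
  S *m (1%:M + (sgn b)%:C *: S) = (sgn b)%:C *: (1%:M + (sgn b)%:C *: S).
Proof.
have ss : (sgn b)%:C * (sgn b)%:C = 1 :> C.
  by rewrite -rmorphM /sgn -exprD -signr_odd oddD addbb expr0.
by move=> hS; rewrite mulmxDr mulmx1 -scalemxAr hS scalerDr scalerA ss scale1r addrC.
Qed.

Section Bell.
Variable n : nat.
Variables S0 S1 S2 : 'M[C]_n.
Hypotheses (S0_invol : S0 *m S0 = 1%:M) (S2_invol : S2 *m S2 = 1%:M).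
Hypotheses (S02 : S0 *m S2 = S2 *m S0) (S1E : S1 = - (S2 *m S0)).

Definition bell (p : bool * bool) : 'M[C]_n :=
  4^-1 *: ((1%:M + (sgn p.1)%:C *: S0) *m (1%:M + (sgn p.2)%:C *: S2)).

Lemma S0_bell p : S0 *m bell p = (sgn p.1)%:C *: bell p.
Proof.
rewrite /bell -scalemxAr mulmxA (invol_eigen _ S0_invol) -scalemxAl.
by rewrite !scalerA mulrC.
Qed.

Lemma S2_bell p : S2 *m bell p = (sgn p.2)%:C *: bell p.
Proof.
have S20 : S2 *m (1%:M + (sgn p.1)%:C *: S0) = (1%:M + (sgn p.1)%:C *: S0) *m S2.
  by rewrite mulmxDr mulmxDl mulmx1 mul1mx -scalemxAr -scalemxAl S02.
rewrite /bell -scalemxAr mulmxA S20 -mulmxA (invol_eigen _ S2_invol) -scalemxAr.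
by rewrite !scalerA mulrC.
Qed.

Lemma S1_bell p : S1 *m bell p = (- (sgn p.1 * sgn p.2))%:C *: bell p.
Proof.
by rewrite S1E mulNmx -mulmxA S0_bell -scalemxAr S2_bell scalerA rmorphN rmorphM scaleNr mulrC.
Qed.

Lemma sum_sign_mx (S : 'M[C]_n) : \sum_b (1%:M + (sgn b)%:C *: S) = 2%:M.
Proof.
rewrite big_bool /sgn /= expr1 expr0 rmorphN1 rmorph1 scaleN1r scale1r.
by rewrite addrACA addNr addr0 -scalemx1 scaler_nat mulr2n.
Qed.

Lemma sum_bell : \sum_p bell p = 1%:M.
Proof.
rewrite /bell -scaler_sumr.
rewrite -(pair_bigA _ (fun e d => (1%:M + (sgn e)%:C *: S0) *m (1%:M + (sgn d)%:C *: S2))) /=.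
under eq_bigr do rewrite -mulmx_sumr sum_sign_mx.
rewrite -mulmx_suml sum_sign_mx -scalar_mxM scale_scalar_mx.
by congr (_%:M); field.
Qed.

Lemma mexp_commuting_involutions a0 a1 a2 :
  mexp (- 'i *: (a0%:C *: S0 + a1%:C *: S1 + a2%:C *: S2))
  = expNimx a0 S0 *m expNimx a1 S1 *m expNimx a2 S2.
Proof.
pose h p := a0 * sgn p.1 - a1 * (sgn p.1 * sgn p.2) + a2 * sgn p.2.
have U_bell p : expNimx a0 S0 *m expNimx a1 S1 *m expNimx a2 S2 *m bell p
    = expNi (h p) *: bell p.
  have s1 : (- (sgn p.1 * sgn p.2)) ^+ 2 = 1 by rewrite sqrrN exprMn !sgn_sqr mulr1.
  rewrite -!mulmxA (expNimx_eigen _ (sgn_sqr _) (S2_bell p)).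
  rewrite -[_ *m (_ *: bell p)]scalemxAr -[_ *m (_ *: (_ *m bell p))]scalemxAr.
  rewrite (expNimx_eigen _ s1 (S1_bell p)) -[_ *m (_ *: bell p)]scalemxAr.
  rewrite (expNimx_eigen _ (sgn_sqr _) (S0_bell p)) !scalerA -!expNiD.
  by congr (expNi _ / _ *: _); rewrite /h; ring.
rewrite (@mexp_spectral _ _ _ bell h _ sum_bell) => [|p].
  transitivity (expNimx a0 S0 *m expNimx a1 S1 *m expNimx a2 S2 *m \sum_p bell p).
    by rewrite mulmx_sumr; apply: eq_bigr => p _; rewrite U_bell.
  by rewrite sum_bell mulmx1.
rewrite -scalemxAl !mulmxDl -!scalemxAl S0_bell S1_bell S2_bell !scalerA -!scalerDl scalerA.
by congr (_ *: _); rewrite /h !rmorphD !rmorphM /= rmorphN !rmorphM /=; ring.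
Qed.
End Bell.
End Exponential.

Section TwoQubit.
Variable R : realType.
Local Notation C := R[i].
Local Notation pauli := (pauli R).
Lemma tensmxNl m n p q (A : 'M[C]_(m, n)) (B : 'M[C]_(p, q)) : (- A) *t B = - (A *t B).
Proof. by apply/matrixP => i j; rewrite !mxE mulNr. Qed.

Lemma tensmxNr m n p q (A : 'M[C]_(m, n)) (B : 'M[C]_(p, q)) : A *t (- B) = - (A *t B).
Proof. by apply/matrixP => i j; rewrite !mxE mulrN. Qed.

Lemma ordS3 (l : 'I_3) : ordS (ordS (ordS l)) = l.
Proof. by apply: val_inj; case: l => -[|[|[|]]]. Qed.

Lemma ordS_neq (l : 'I_3) : l != ordS l.
Proof. by case: l => -[|[|[|]]]. Qed.

Lemma ordSS_neq (l : 'I_3) : l != ordS (ordS l).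
Proof. by case: l => -[|[|[|]]]. Qed.

Lemma ord3_cases (l : 'I_3) : [\/ l = ord0, l = ordS ord0 | l = ordS (ordS ord0)].
Proof. by case: l => -[|[|[|//]]] ?; [apply: Or31 | apply: Or32 | apply: Or33]; apply: val_inj. Qed.

Definition SS (k : 'I_3) : 'M[C]_(2 * 2) := pauli k *t pauli k.

Lemma SS_invol k : SS k *m SS k = 1%:M.
Proof. by rewrite tensmx_mul pauli_sqr; exact: tens1mx1. Qed.

Lemma SS_hermitian k : dagger (SS k) = SS k.
Proof. by rewrite /SS dagger_tens pauli_hermitian. Qed.

Lemma SS_comm j k : SS j *m SS k = SS k *m SS j.
Proof.
have [-> // | jk] := eqVneq j k.
by rewrite !tensmx_mul (pauli_anticomm _ jk) tensmxNl tensmxNr opprK.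
Qed.

Lemma SS_mulS k : SS k *m SS (ordS k) = - SS (ordS (ordS k)).
Proof.
rewrite tensmx_mul pauli_mulS tensmxZl tensmxZr scalerA.
by rewrite -expr2 sqr_i scaleN1r.
Qed.

Lemma pauli_tens1_comm l : (pauli l *t 1%:M) *m SS l = SS l *m (pauli l *t 1%:M).
Proof. by rewrite !tensmx_mul mul1mx mulmx1. Qed.

Lemma pauli_tens1_anticomm l k : l != k ->
  (pauli l *t 1%:M) *m SS k = - (SS k *m (pauli l *t 1%:M)).
Proof. by move=> lk; rewrite !tensmx_mul mul1mx mulmx1 (pauli_anticomm _ lk) tensmxNl. Qed.

Lemma mulmx_cycle n (A B D : 'M[C]_n) :
  A *m B = B *m A -> A *m D = D *m A -> A *m B *m D = B *m D *m A.
Proof. by move=> hAB hAD; rewrite hAB -!mulmxA hAD. Qed.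

Lemma mulmx_span1 n (X S : 'M[C]_n) (c e : C) :
  X *m (c *: 1%:M - e *: S) = c *: X - e *: (X *m S).
Proof. by rewrite mulmxBr -!scalemxAr mulmx1. Qed.

Lemma mulmx_span2 n (X S T : 'M[C]_n) (c e c' e' : C) :
  X *m (c *: 1%:M - e *: S) *m (c' *: 1%:M - e' *: T)
  = (c' * c) *: X - (c' * e) *: (X *m S)
    - ((e' * c) *: (X *m T) - (e' * e) *: (X *m S *m T)).
Proof.
rewrite mulmx_span1 mulmx_span1 mulmxBl.
rewrite -!scalemxAl.
rewrite !scalerBr !scalerA.
done.
Qed.

Lemma mxtrace_comb4 n (A B D E Y : 'M[C]_n) (x y z w : C) :
  \tr ((x *: A - y *: B - (z *: D - w *: E)) *m Y)
  = x * \tr (A *m Y) - y * \tr (B *m Y) - (z * \tr (D *m Y) - w * \tr (E *m Y)).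
Proof.
by rewrite !mulmxBl -!scalemxAl !raddfB /= !mxtraceZ.
Qed.





Section Omega.
Variable a : 'I_3 -> R.
Local Notation r k := (expNimx (a k) (SS k)).

Definition Omega : 'M[C]_(2 * 2) := r ord0 *m r (ordS ord0) *m r (ordS (ordS ord0)).

Lemma Omega_cycle l : Omega = r l *m r (ordS l) *m r (ordS (ordS l)).
Proof.
have rC j k : r j *m r k = r k *m r j by apply/expNimx_commute/SS_comm.
case: (ord3_cases l) => ->; rewrite ?ordS3.
- by [].
- exact: mulmx_cycle.
- exact: etrans (mulmx_cycle (rC _ _) (rC _ _)) (mulmx_cycle (rC _ _) (rC _ _)).
Qed.

Lemma Omega_unitary : dagger Omega *m Omega = 1%:M.
Proof.
by rewrite /Omega; apply: unitary_expNimx3; (exact: SS_invol || exact: SS_hermitian).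
Qed.

Section Cyclic.
Variables l m n : 'I_3.
Hypotheses (lm : ordS l = m) (mn : ordS m = n).

Lemma ordS_cyclic : ordS n = l.
Proof. by rewrite -mn -lm ordS3. Qed.

Lemma pauli_mul_lm : pauli l *m pauli m = 'i *: pauli n.
Proof. by rewrite -mn -lm pauli_mulS. Qed.

Lemma pauli_mul_nl : pauli n *m pauli l = 'i *: pauli m.
Proof. by rewrite -ordS_cyclic pauli_mulS ordS_cyclic lm. Qed.

Lemma Omega_cyclic : Omega = r l *m r m *m r n.
Proof. by rewrite (Omega_cycle l) lm mn. Qed.

Lemma heisenberg :
  dagger Omega *m (pauli l *t 1%:M) *m Omega
  = (pauli l *t 1%:M) *m expNimx (a m *+ 2) (SS m) *m expNimx (a n *+ 2) (SS n).
Proof.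
rewrite Omega_cyclic.
apply: (conj_expNimx3 (SS_invol _) (SS_invol _) (SS_invol _)
  (SS_hermitian _) (SS_hermitian _) (SS_hermitian _) (SS_comm _ _)).
- exact: pauli_tens1_comm.
- by apply: pauli_tens1_anticomm; rewrite -lm ordS_neq.
- by apply: pauli_tens1_anticomm; rewrite -mn -lm ordSS_neq.
Qed.

Lemma mxtrace_pauli_tens1_SS_m (Y : 'M[C]_(2 * 2)) :
  \tr ((pauli l *t 1%:M) *m SS m *m Y) = 'i * \tr ((pauli n *t pauli m) *m Y).
Proof.
by rewrite tensmx_mul pauli_mul_lm mul1mx tensmxZl -scalemxAl mxtraceZ.
Qed.

Lemma mxtrace_pauli_tens1_SS_n (Y : 'M[C]_(2 * 2)) :
  \tr ((pauli l *t 1%:M) *m SS n *m Y) = - ('i * \tr ((pauli m *t pauli n) *m Y)).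
Proof.
have ln : l != n by rewrite -mn -lm ordSS_neq.
rewrite tensmx_mul mul1mx (pauli_anticomm _ ln) pauli_mul_nl tensmxNl tensmxZl.
by rewrite mulNmx -scalemxAl raddfN /= mxtraceZ.
Qed.

Lemma mxtrace_pauli_tens1_SS_mn (Y : 'M[C]_(2 * 2)) :
  \tr ((pauli l *t 1%:M) *m SS m *m SS n *m Y) = - \tr ((1%:M *t pauli l) *m Y).
Proof.
rewrite -[_ *m SS m *m SS n]mulmxA -mn -lm SS_mulS ordS3 mulmxN tensmx_mul pauli_sqr.
by rewrite mul1mx mulNmx raddfN.
Qed.

Lemma mxtrace_heisenberg (Y : 'M[C]_(2 * 2)) :
  \tr (dagger Omega *m (pauli l *t 1%:M) *m Omega *m Y) =
    (cos (a m *+ 2) * cos (a n *+ 2))%:C * \tr ((pauli l *t 1%:M) *m Y)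
  + (sin (a m *+ 2) * cos (a n *+ 2))%:C * \tr ((pauli n *t pauli m) *m Y)
  - (cos (a m *+ 2) * sin (a n *+ 2))%:C * \tr ((pauli m *t pauli n) *m Y)
  + (sin (a m *+ 2) * sin (a n *+ 2))%:C * \tr ((1%:M *t pauli l) *m Y).
Proof.
pose c k := (cos (a k *+ 2))%:C; pose e k := 'i * (sin (a k *+ 2))%:C.
have H : dagger Omega *m (pauli l *t 1%:M) *m Omega =
    (c n * c m) *: (pauli l *t 1%:M) - (c n * e m) *: ((pauli l *t 1%:M) *m SS m)
    - ((e n * c m) *: ((pauli l *t 1%:M) *m SS n)
       - (e n * e m) *: ((pauli l *t 1%:M) *m SS m *m SS n)).
  rewrite heisenberg. exact: mulmx_span2.
rewrite H. rewrite mxtrace_comb4 /c /e.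
rewrite mxtrace_pauli_tens1_SS_mn mxtrace_pauli_tens1_SS_m mxtrace_pauli_tens1_SS_n.
move: (\tr ((pauli l *t 1%:M) *m Y)) (\tr ((pauli n *t pauli m) *m Y)).
move: (\tr ((pauli m *t pauli n) *m Y)) (\tr ((1%:M *t pauli l) *m Y)).
move: (cos (a m *+ 2)) (sin (a m *+ 2)) (cos (a n *+ 2)) (sin (a n *+ 2)).
by move=> cm sm cn sn [x4 y4] [x3 y3] [x2 y2] [x1 y1]; complex_eq; ring.
Qed.

End Cyclic.
End Omega.
Lemma mexp_Omega (a : 'I_3 -> R) :
  mexp (- 'i *: ((a ord0)%:C *: SS ord0 + (a (ordS ord0))%:C *: SS (ordS ord0)
                 + (a (ordS (ordS ord0)))%:C *: SS (ordS (ordS ord0)))) = Omega a.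
Proof.
apply: mexp_commuting_involutions; [exact: SS_invol | exact: SS_invol | exact: SS_comm |].
by rewrite SS_mulS !ordS3 opprK.
Qed.

End TwoQubit.

Section ReducedDynamics.
Variable R : realType.
Local Notation C := R[i].
Local Notation pauli := (pauli R).
Variable rho : 'M[C]_(2 * 2).
Hypothesis rho_herm : dagger rho = rho.
Hypothesis rho_corr : forall i j : 'I_3, i != j -> corr rho i j = 0.

Lemma mxtrace_pauli_tens_rho j k : j != k -> \tr ((pauli j *t pauli k) *m rho) = 0.
Proof. by move=> jk; rewrite mxtrace_mulC; exact: rho_corr. Qed.

Definition blochS k := complex.Re (\tr ((pauli k *t 1%:M) *m rho)).
Definition blochE k := complex.Re (\tr ((1%:M *t pauli k) *m rho)).

Lemma blochS_real k : \tr ((pauli k *t 1%:M) *m rho) = (blochS k)%:C.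
Proof. by apply: mxtrace_hermitian_real; rewrite // dagger_tens pauli_hermitian dagger1. Qed.

Lemma blochE_real k : \tr ((1%:M *t pauli k) *m rho) = (blochE k)%:C.
Proof. by apply: mxtrace_hermitian_real; rewrite // dagger_tens pauli_hermitian dagger1. Qed.

Lemma ptraceS_bloch : \tr rho = 1 -> ptraceS rho = bloch blochE.
Proof.
move=> tr1; have trP k : \tr (pauli k *m ptraceS rho) = (blochE k)%:C.
  by rewrite mxtrace_ptraceS blochE_real.
rewrite (bloch_of_trace (A := ptraceS rho)); first by congr bloch; apply: boolp.funext => k; rewrite trP.
  by rewrite mxtrace_ptraceS1.
by move=> k; rewrite trP.
Qed.

Lemma blochE_norm : is_density rho -> \sum_k blochE k ^+ 2 <= 1.
Proof.
case=> _ psd_rho tr1; apply: psd_bloch; rewrite -ptraceS_bloch //.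
exact: psd_ptraceS.
Qed.

Variable a : 'I_3 -> R.
Local Notation cs k := (cos (a k *+ 2)).
Local Notation sn k := (sin (a k *+ 2)).

Lemma reduced_dynamics (z : 'I_3 -> R) : \tr rho = 1 ->
  (forall l, let m := ordS l in let n := ordS m in
     sn m * sn n * (blochE l - z l) - sn m * cs n * blochS n * z m
     + cs m * sn n * blochS m * z n = 0) ->
  ptraceE (Omega a *m rho *m dagger (Omega a))
  = ptraceE (Omega a *m (ptraceE rho *t bloch z) *m dagger (Omega a)).
Proof.
move=> tr1 hz; apply: mx2_eq_pauli => [|l].
  rewrite !mxtrace_ptraceE1 !mxtrace_unitary_conj ?Omega_unitary //.
  by rewrite mxtrace_tens mxtrace_ptraceE1 mxtrace_bloch tr1 mulr1.
rewrite !mxtrace_ptraceE !mxtrace_conj !(mxtrace_heisenberg a (erefl (ordS l)) (erefl _)).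
rewrite !mxtrace_tens_mul !mul1mx mxtrace_ptraceE1 tr1 !mxtrace_pauli_bloch mxtrace_bloch.
rewrite !mxtrace_ptraceE !blochS_real !blochE_real.
have nm : ordS (ordS l) != ordS l by rewrite eq_sym ordS_neq.
rewrite (mxtrace_pauli_tens_rho nm) (mxtrace_pauli_tens_rho (ordS_neq _)).
have := hz l => /=; move: (blochS _) (blochS _) (blochS _) (blochE _) (z _) (z _) (z _).
move: (cs _) (cs _) (sn _) (sn _) => c1 c2 s1 s2 u0 u1 u2 v0 z0 z1 z2 h.
by complex_eq; [lra | ring].
Qed.
End ReducedDynamics.

Theorem theorem2 (R : realType) (a1 a2 a3 : R) (rho : 'M[R[i]]_(2 * 2)) :
  is_density rho ->
  (forall i j : 'I_3, i != j -> corr rho i j = 0) ->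
  let Omega : 'M[R[i]]_(2 * 2) :=
    mexp (- 'i *: (a1%:C *: (sigma1 R *t sigma1 R)
                 + a2%:C *: (sigma2 R *t sigma2 R)
                 + a3%:C *: (sigma3 R *t sigma3 R))) in
  exists zeta : 'M[R[i]]_2,
    is_density zeta /\
    ptraceE (Omega *m rho *m dagger Omega)
    = ptraceE (Omega *m (ptraceE rho *t zeta) *m dagger Omega).
Proof.
move=> rho_density rho_corr U.
pose a k := [:: a1; a2; a3]`_k.
have -> : U = Omega a by rewrite /U -mexp_Omega.
have [z [hz z_norm]] := bloch_system (fun k => sin (a k *+ 2)) (fun k => cos (a k *+ 2))
  (blochS rho) (blochE rho).
have [rho_herm _ tr1] := rho_density.
exists (bloch z); split; last exact: reduced_dynamics.
by apply/bloch_density/(le_trans z_norm); exact: blochE_norm.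
Qed.
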